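(* Let $d$ be prime, $n\ge1$, $G$ invertible over $\mathbb Z_d$, and $\rho,\tau,\sigma,\rho_1,\rho_2,\sigma_1,\sigma_2$ be $n$-qudit states. (1) If $G$ is odd-parity positive, $\|\sigma\boxtimes\rho-\sigma\boxtimes\tau\|_{W_1}\le\|\rho-\tau\|_{W_1}$. (2) If $G$ is even-parity positive, $\|\rho\boxtimes\sigma-\tau\boxtimes\sigma\|_{W_1}\le\|\rho-\tau\|_{W_1}$. (3) If $G$ is positive, $\|\rho_1\boxtimes\sigma_1-\rho_2\boxtimes\sigma_2\|_{W_1}\le\|\rho_1-\rho_2\|_{W_1}+\|\sigma_1-\sigma_2\|_{W_1}$.
   Context: Fix a prime $d$. Let $G=\begin{pmatrix}g_{00}&g_{01}\\ g_{10}&g_{11}\end{pmatrix}$ over $\mathbb Z_d$ with $\det G\not\equiv0$, $N=(\det G)^{-1}$. $G$ is nontrivial if at most one entry is $0$ mod $d$; odd-parity positive if nontrivial and $g_{01},g_{10}\not\equiv0$; even-parity positive if nontrivial and $g_{00},g_{11}\not\equiv0$; positive if both. Key unitary on $(\mathbb C^d)^{\otimes n}\otimes(\mathbb C^d)^{\otimes n}$: $U|\vec i\rangle|\vec j\rangle=|Ng_{11}\vec i-Ng_{10}\vec j\rangle|-Ng_{01}\vec i+Ng_{00}\vec j\rangle$; convolution $\rho\boxtimes\sigma=\mathrm{Tr}_B[U(\rho\otimes\sigma)U^\dagger]$. The quantum Wasserstein distance of order 1 (De Palma–Marvian–Trevisan–Lloyd) is $\|\rho-\sigma\|_{W_1}=\min\{\sum_{i=1}^n|c_i|:\rho-\sigma=\sum_{i=1}^nc_i(\rho_i-\sigma_i),\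 \rho_i,\sigma_i\ n\text{-qudit states},\ \mathrm{Tr}_i\rho_i=\mathrm{Tr}_i\sigma_i\ \forall i\}$, where $\mathrm{Tr}_i$ is the partial trace over the $i$-th qudit. *)

From HB Require Import structures.
From mathcomp Require Import all_boot all_order all_algebra.
From mathcomp Require Import boolp classical_sets reals.
From mathcomp Require Import complex.
Set Implicit Arguments. Unset Strict Implicit. Unset Printing Implicit Defensive.
Import Order.TTheory GRing.Theory Num.Theory.
Local Open Scope ring_scope.

Notation qbasis d n := {ffun 'I_n -> 'F_d}.

Section QuditDefs.
Variable R : realType.
Local Notation C := (R[i]).

(* Computational basis labels of n qudits of dimension d: vectors in Z_d^n.
   For d prime, 'F_d is Z_d. *)

Definition op (T : finType) := T -> T -> C.

(* positive semidefinite: <v, A v> >= 0 for every vector v (order of C: real and >= 0) *)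
Definition psd (T : finType) (A : op T) : Prop :=
  forall v : T -> C, 0 <= \sum_(x : T) \sum_(y : T) Num.conj (v x) * A x y * v y.

Definition trace (T : finType) (A : op T) : C := \sum_(x : T) A x x.

Definition is_state (T : finType) (A : op T) : Prop := psd A /\ trace A = 1.

Definition qstate (d n : nat) (rho : op (qbasis d n)) : Prop := is_state rho.

(* Partial trace over the i-th qudit.  The result is an operator on the remaining
   n-1 qudits; we represent it as a function of full labels x y that does not depend
   on the i-th components x i, y i. *)
Definition ptrace (d n : nat) (i : 'I_n) (A : op (qbasis d n)) : op (qbasis d n) :=
  fun x y => \sum_(k : 'F_d)
     A [ffun j => if j == i then k else x j] [ffun j => if j == i then k else y j].

(* Quantum Wasserstein distance of order 1 (De Palma-Marvian-Trevisan-Lloyd),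
   applied to A = rho - sigma; the minimum is taken as an infimum (it is attained). *)
Definition W1 (d n : nat) (A : op (qbasis d n)) : R :=
  inf [set s : R | exists (c : 'I_n -> R) (rh sg : 'I_n -> op (qbasis d n)),
     (forall i, qstate (rh i) /\ qstate (sg i) /\ ptrace i (rh i) = ptrace i (sg i)) /\
     (forall x y, A x y = \sum_(i < n) real_complex R (c i) * (rh i x y - sg i x y)) /\
     s = \sum_(i < n) `|c i| ].

Definition op_sub (T : finType) (A B : op T) : op T := fun x y => A x y - B x y.

Definition tens (T : finType) (A B : op T) : op (T * T)%type :=
  fun x y => A x.1 y.1 * B x.2 y.2.

Definition keymap (d n : nat) (G : 'M['F_d]_2) (ij : qbasis d n * qbasis d n)
  : qbasis d n * qbasis d n :=
  let N := (\det G)^-1 in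
  ([ffun k => N * G 1 1 * ij.1 k - N * G 1 0 * ij.2 k],
   [ffun k => - N * G 0 1 * ij.1 k + N * G 0 0 * ij.2 k]).

Definition keyU (d n : nat) (G : 'M['F_d]_2) : op (qbasis d n * qbasis d n)%type :=
  fun a b => if a == keymap G b then 1 else 0.

Definition conjU (T : finType) (U X : op T) : op T :=
  fun a b => \sum_(c : T) \sum_(e : T) U a c * X c e * Num.conj (U b e).

Definition ptraceB (T : finType) (X : op (T * T)%type) : op T :=
  fun x y => \sum_(z : T) X (x, z) (y, z).

Definition qconv (d n : nat) (G : 'M['F_d]_2) (rho sigma : op (qbasis d n))
  : op (qbasis d n) :=
  ptraceB (conjU (@keyU d n G) (tens rho sigma)).

Definition nontrivialG (d : nat) (G : 'M['F_d]_2) : bool :=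
  (#|[set ij : 'I_2 * 'I_2 | G ij.1 ij.2 == 0%R]| <= 1)%N.
Definition odd_positive (d : nat) (G : 'M['F_d]_2) : bool :=
  [&& nontrivialG G, G 0 1 != 0 & G 1 0 != 0].
Definition even_positive (d : nat) (G : 'M['F_d]_2) : bool :=
  [&& nontrivialG G, G 0 0 != 0 & G 1 1 != 0].
Definition positiveG (d : nat) (G : 'M['F_d]_2) : bool :=
  odd_positive G && even_positive G.

End QuditDefs.

(* The key unitary U permutes basis labels: on every qudit position it applies the
   invertible linear map of Z_d^2 given by G^-1, whose inverse [keyinv G] is given by G
   itself.  Hence (rho [x] sigma) x y = sum_z rho (L1 x z) (L1 y z) * sigma (L2 x z) (L2 y z)
   with L1, L2 the rows of G acting position-wise.  From this formula:
   - the convolution of two states is a state (positivity of tensor products, proved with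
     a spectral decomposition, is preserved under pulling back along label maps);
   - sigma [x] rho is linear in rho, and its partial trace over the i-th qudit only depends
     on the partial trace of rho over the i-th qudit.
   Hence every admissible decomposition  rho - tau = sum_i c_i (rho_i - sigma_i)  in the
   definition of W1 is carried to an admissible decomposition of sigma [x] rho - sigma [x] tau
   of the same cost, and W1, an infimum of costs, can only decrease; exchanging the columns
   of G exchanges the arguments of the convolution.  This requires the set of costs to be
   nonempty, which is shown with the hybrid states that replace the first k qudits by the
   maximally mixed state (a telescoping sum over k).  Part (3) follows from (1), (2) and the
   triangle inequality for W1, obtained by merging two decompositions qudit by qudit. *)

From HB Require Import structures.
From mathcomp Require Import all_boot all_order all_algebra.
From mathcomp Require Import boolp classical_sets reals complex ring.
Set Implicit Arguments. Unset Strict Implicit. Unset Printing Implicit Defensive.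
Import Order.TTheory GRing.Theory Num.Theory.
Local Open Scope ring_scope.

Lemma sum_fiber (V : nmodType) (T X : finType) (M : X -> T) (H : T -> X -> V) :
  \sum_t \sum_(x | M x == t) H t x = \sum_x H (M x) x.
Proof.
rewrite (exchange_big_dep xpredT) //=; apply: eq_bigr => x _.
by rewrite (big_pred1 (M x)) // => t; rewrite eq_sym.
Qed.

Lemma sum_delta (S : pzSemiRingType) (T : finType) (x : T) (F : T -> S) :
  \sum_z (z == x)%:R * F z = F x.
Proof.
rewrite (bigD1 x) //= eqxx mul1r big1 ?addr0 // => z /negbTE ->; by rewrite mul0r.
Qed.

Lemma sum_deltar (S : pzSemiRingType) (T : finType) (x : T) (F : T -> S) :
  \sum_z F z * (z == x)%:R = F x.
Proof.
rewrite (bigD1 x) //= eqxx mulr1 big1 ?addr0 // => z /negbTE ->; by rewrite mulr0.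
Qed.

Lemma sum_pair (V : nmodType) (T U : finType) (F : T * U -> V) :
  \sum_p F p = \sum_a \sum_b F (a, b).
Proof. by rewrite pair_bigA; apply: eq_bigr => -[]. Qed.

Lemma det22 (F : comPzRingType) (G : 'M[F]_2) :
  \det G = G 0 0 * G 1 1 - G 0 1 * G 1 0.
Proof.
rewrite (expand_det_row _ 0) !big_ord_recl big_ord0 addr0 /cofactor !det_mx11 !mxE /=.
have e1 : lift (0 : 'I_2) (0 : 'I_1) = 1 by apply: val_inj.
have e2 : lift (lift (ord0 : 'I_2) (ord0 : 'I_1)) (0 : 'I_1) = 0 by apply: val_inj.
rewrite e2 e1 /bump /= expr0 expr1; ring.
Qed.

Section PositiveOperators.
Variable R : realType.
Local Notation C := (R[i]).

Definition qf (T : finType) (A : op R T) (u v : T -> C) : C :=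
  \sum_x \sum_y (u x)^* * A x y * v y.

Lemma qf_ext (T : finType) (A B : op R T) u v :
  (forall x y, A x y = B x y) -> qf A u v = qf B u v.
Proof. by move=> e; apply: eq_bigr => x _; apply: eq_bigr => y _; rewrite e. Qed.

Lemma psd_ext (T : finType) (A B : op R T) :
  (forall x y, A x y = B x y) -> psd A -> psd B.
Proof. by move=> e hA v; rewrite -[X in _ <= X](qf_ext _ _ e); apply: hA. Qed.

Lemma qfDl (T : finType) (A : op R T) u1 u2 v :
  qf A (fun z => u1 z + u2 z) v = qf A u1 v + qf A u2 v.
Proof.
rewrite /qf -big_split; apply: eq_bigr => x _; rewrite -big_split.
by apply: eq_bigr => y _; rewrite rmorphD /=; ring.
Qed.

Lemma qfDr (T : finType) (A : op R T) u v1 v2 :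
  qf A u (fun z => v1 z + v2 z) = qf A u v1 + qf A u v2.
Proof.
rewrite /qf -big_split; apply: eq_bigr => x _; rewrite -big_split.
by apply: eq_bigr => y _ /=; ring.
Qed.

Lemma qfZl (T : finType) (A : op R T) c u v :
  qf A (fun z => c * u z) v = c^* * qf A u v.
Proof.
rewrite /qf mulr_sumr; apply: eq_bigr => x _; rewrite mulr_sumr.
by apply: eq_bigr => y _; rewrite rmorphM /=; ring.
Qed.

Lemma qfZr (T : finType) (A : op R T) c u v :
  qf A u (fun z => c * v z) = c * qf A u v.
Proof.
rewrite /qf mulr_sumr; apply: eq_bigr => x _; rewrite mulr_sumr.
by apply: eq_bigr => y _ /=; ring.
Qed.

Definition edelta (T : finType) (x : T) : T -> C := fun z => (z == x)%:R.

Lemma qf_delta (T : finType) (A : op R T) x y : qf A (edelta x) (edelta y) = A x y.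
Proof.
rewrite /qf /edelta; under eq_bigr do under eq_bigr do rewrite conjC_nat -mulrA.
under eq_bigr do rewrite -mulr_sumr.
by rewrite sum_delta sum_deltar.
Qed.

(* Positive operators are Hermitian: <v, A v> is real for v = |x> + c |y>, which for
   c = 1 and c = i forces A x y = (A y x)^*. *)
Lemma psd_herm (T : finType) (A : op R T) : psd A -> forall x y, A x y = (A y x)^*.
Proof.
move=> hA x y.
have real_qf v : (qf A v v)^* = qf A v v by apply: geC0_conj; apply: hA.
have hx := real_qf (edelta x); have hy := real_qf (edelta y).
rewrite qf_delta in hx; rewrite qf_delta in hy.
set a := A x y; set b := A y x.
have key c : c * (a - b^*) + c^* * (b - a^*) = 0.
  have := real_qf (fun z => edelta x z + c * edelta y z).
  rewrite qfDl !qfDr qfZl !qfZr qfZl !qf_delta -/a -/b.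
  rewrite !rmorphD !rmorphM /= !conjCK hx hy => /eqP; rewrite eq_sym -subr_eq0 => /eqP <-.
  by ring.
have e1 := key 1; rewrite conjC1 !mul1r in e1.
move/eqP: e1; rewrite addrC addr_eq0 => /eqP e1.
have ki := key 'i; rewrite conjCi e1 in ki.
have : 'i * 2 * (a - b^*) = 0 by rewrite -ki; ring.
move/eqP; rewrite !mulf_eq0 (negbTE (neq0Ci _)) pnatr_eq0 subr_eq0 /=.
by move=> /eqP.
Qed.

Lemma psd_sum (T I : finType) (F : I -> op R T) :
  (forall i, psd (F i)) -> psd (fun x y => \sum_i F i x y).
Proof.
move=> hF v.
have -> : \sum_x \sum_y (v x)^* * (\sum_i F i x y) * v y =
          \sum_i \sum_x \sum_y (v x)^* * F i x y * v y.
  rewrite [RHS]exchange_big /=; apply: eq_bigr => x _.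
  rewrite [RHS]exchange_big /=; apply: eq_bigr => y _.
  by rewrite mulr_sumr mulr_suml.
by apply: sumr_ge0 => i _; apply: hF.
Qed.

Lemma psd_scale (T : finType) (A : op R T) (c : C) :
  0 <= c -> psd A -> psd (fun x y => c * A x y).
Proof.
move=> c0 hA v; change (0 <= qf (fun x y => c * A x y) v v).
have -> : qf (fun x y => c * A x y) v v = c * qf A v v.
  rewrite /qf mulr_sumr; apply: eq_bigr => x _.
  by rewrite mulr_sumr; apply: eq_bigr => y _; ring.
by apply: mulr_ge0 => //; apply: hA.
Qed.

Lemma psd_add (T : finType) (A B : op R T) :
  psd A -> psd B -> psd (fun x y => A x y + B x y).
Proof.
move=> hA hB v; change (0 <= qf (fun x y => A x y + B x y) v v).
have -> : qf (fun x y => A x y + B x y) v v = qf A v v + qf B v v.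
  rewrite -big_split; apply: eq_bigr => x _.
  by rewrite -big_split; apply: eq_bigr => y _ /=; ring.
by apply: addr_ge0; [apply: hA | apply: hB].
Qed.

Lemma psd_pull (T X : finType) (A : op R T) (M : X -> T) (g : X -> C) :
  psd A -> psd (fun x y => (g x)^* * A (M x) (M y) * g y).
Proof.
move=> hA v; change (0 <= qf (fun x y => (g x)^* * A (M x) (M y) * g y) v v).
pose u t := \sum_(x | M x == t) g x * v x.
suff <- : qf A u u = qf (fun x y => (g x)^* * A (M x) (M y) * g y) v v by apply: hA.
have fiber t t' : (\sum_(x | M x == t) g x * v x)^* * A t t' *
                  \sum_(y | M y == t') g y * v y =
    \sum_(x | M x == t) \sum_(y | M y == t') (g x * v x)^* * A t t' * (g y * v y).
  rewrite rmorph_sum !mulr_suml /=; apply: eq_bigr => x _.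
  by rewrite mulr_sumr.
rewrite /qf /u; under eq_bigr do under eq_bigr do rewrite fiber.
under eq_bigr do rewrite exchange_big /=.
rewrite (sum_fiber M (fun t x =>
  \sum_j \sum_(y | M y == j) (g x * v x)^* * A t j * (g y * v y))).
apply: eq_bigr => x _.
rewrite (sum_fiber M (fun t y => (g x * v x)^* * A (M x) t * (g y * v y))).
by apply: eq_bigr => y _; rewrite !rmorphM /=; ring.
Qed.

Lemma qf_spectral (T : finType) (B : op R T) m (w : 'I_m -> T -> C)
    (lam : 'I_m -> C) u v :
  (forall x y, B x y = \sum_k (w k x)^* * lam k * w k y) ->
  qf B u v = \sum_k lam k * (\sum_x w k x * u x)^* * (\sum_y w k y * v y).
Proof.
move=> eB; rewrite (qf_ext _ _ eB).
transitivity (\sum_k \sum_x \sum_y lam k * (w k x * u x)^* * (w k y * v y)).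
  rewrite [RHS]exchange_big /=; apply: eq_bigr => x _.
  rewrite [RHS]exchange_big /=; apply: eq_bigr => y _.
  by rewrite mulr_sumr mulr_suml; apply: eq_bigr => k _; rewrite rmorphM /=; ring.
apply: eq_bigr => k _; rewrite rmorph_sum [lam k * _]mulr_sumr mulr_suml.
apply: eq_bigr => x _.
by rewrite mulr_sumr; apply: eq_bigr => y _; ring.
Qed.

Lemma sum_enum (T : finType) (F : 'I_#|T| -> C) :
  \sum_(x : T) F (enum_rank x) = \sum_i F i.
Proof.
rewrite (reindex (@enum_val T xpredT)) /=; last exact/onW_bij/enum_val_bij.
by apply: eq_bigr => i _; rewrite enum_valK.
Qed.

Local Open Scope sesquilinear_scope.

Lemma psd_spectral (T : finType) (B : op R T) : psd B ->
  exists (m : nat) (w : 'I_m -> T -> C) (lam : 'I_m -> C),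
    (forall k, 0 <= lam k) /\ forall x y, B x y = \sum_k (w k x)^* * lam k * w k y.
Proof.
move=> hB.
pose Bm : 'M[C]_#|T| := \matrix_(i, j) B (enum_val i) (enum_val j).
have Bn : Bm \is normalmx.
  have Bh : Bm ^t* = Bm by apply/matrixP => i j; rewrite !mxE (psd_herm hB (enum_val i)).
  by rewrite qualifE Bh.
have Pu := spectral_unitarymx Bm.
set P := spectralmx Bm in Pu; set sp := spectral_diag Bm.
pose w k x := P k (enum_rank x).
have Bw x y : B x y = \sum_k (w k x)^* * sp 0 k * w k y.
  have := orthomx_spectralP Bn; rewrite invmx_unitary // => Bdec.
  have -> : B x y = Bm (enum_rank x) (enum_rank y) by rewrite mxE !enum_rankK.
  by rewrite Bdec mxE; apply: eq_bigr => k _; rewrite mul_mx_diag !mxE.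
have orth k l : \sum_x w k x * (w l x)^* = (k == l)%:R.
  rewrite (sum_enum (fun i => P k i * (P l i)^*)).
  have := congr1 (fun M : 'M[C]_#|T| => M k l) (unitarymxP Pu); rewrite !mxE => <-.
  by apply: eq_bigr => i _; rewrite !mxE.
exists #|T|, w, (fun k => sp 0 k); split => // k.
have := hB (fun x => (w k x)^*).
rewrite -/(qf B _ _) (qf_spectral _ _ Bw); under eq_bigr do rewrite !orth conjC_nat.
by rewrite (bigD1 k) //= eqxx mulr1 mulr1 big1 ?addr0 // => l /negbTE ->; rewrite !mulr0.
Qed.

Local Close Scope sesquilinear_scope.

Lemma tens_psd (T : finType) (A B : op R T) : psd A -> psd B -> psd (tens A B).
Proof.
move=> hA /psd_spectral [m [w [lam [lam0 eB]]]].
apply: (@psd_ext _ (fun p q => \sum_k lam k * ((w k p.2)^* * A p.1 q.1 * w k q.2))).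
  by move=> p q; rewrite /tens eB mulr_sumr; apply: eq_bigr => k _; ring.
apply: psd_sum => k; apply: psd_scale => //.
exact: (psd_pull (fun p : T * T => p.1) (fun p => w k p.2) hA).
Qed.

End PositiveOperators.

Section Convolution.
Variable R : realType.
Local Notation C := (R[i]).
Variables (d n : nat).
Local Notation Q := (qbasis d n).

(* The inverse of the key map: position-wise, the labels (x, z) of the output and of the
   traced-out system come from the input labels (g00 x + g10 z, g01 x + g11 z). *)
Definition L1 (G : 'M['F_d]_2) (x z : Q) : Q := [ffun j => G 0 0 * x j + G 1 0 * z j].
Definition L2 (G : 'M['F_d]_2) (x z : Q) : Q := [ffun j => G 0 1 * x j + G 1 1 * z j].
Definition keyinv (G : 'M['F_d]_2) (p : Q * Q) : Q * Q := (L1 G p.1 p.2, L2 G p.1 p.2).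

Lemma det_invK (G : 'M['F_d]_2) :
  \det G != 0 -> (\det G)^-1 * (G 0 0 * G 1 1 - G 0 1 * G 1 0) = 1.
Proof. by move=> dG; rewrite -det22 mulVf. Qed.

Lemma keymapK (G : 'M['F_d]_2) : \det G != 0 -> cancel (keymap G) (keyinv G).
Proof.
move=> /det_invK h [a b]; rewrite /keyinv /keymap /L1 /L2 /=.
by congr pair; apply/ffunP => j; rewrite !ffunE -[RHS]mul1r -h; ring.
Qed.

Lemma keyinvK (G : 'M['F_d]_2) : \det G != 0 -> cancel (keyinv G) (keymap G).
Proof.
move=> /det_invK h [a b]; rewrite /keyinv /keymap /L1 /L2 /=.
by congr pair; apply/ffunP => j; rewrite !ffunE -[RHS]mul1r -h; ring.
Qed.

Lemma qconvE (G : 'M['F_d]_2) (s a : op R Q) x y : \det G != 0 ->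
  qconv G s a x y = \sum_z tens s a (keyinv G (x, z)) (keyinv G (y, z)).
Proof.
move=> dG; rewrite /qconv /ptraceB /conjU /keyU; apply: eq_bigr => z _.
have eqk p c : (p == keymap G c) = (c == keyinv G p).
  by apply/eqP/eqP => [->|->]; [rewrite keymapK | rewrite keyinvK].
have ifE (b : bool) : (if b then 1 else 0 : C) = b%:R by case: b.
under eq_bigr do under eq_bigr do rewrite !eqk !ifE conjC_nat -mulrA.
under eq_bigr do rewrite -mulr_sumr.
by rewrite (sum_delta (keyinv G (x, z))) sum_deltar.
Qed.

Definition Gswap (G : 'M['F_d]_2) : 'M['F_d]_2 :=
  \matrix_(i, j) G i (if j == 0 then 1 else 0).

Lemma Gswap_det (G : 'M['F_d]_2) : \det G != 0 -> \det (Gswap G) != 0.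
Proof. by rewrite !det22 !mxE /= -oppr_eq0; congr (~~ (_ == _)); ring. Qed.

Lemma qconv_swap (G : 'M['F_d]_2) (s a : op R Q) x y : \det G != 0 ->
  qconv G s a x y = qconv (Gswap G) a s x y.
Proof.
move=> dG; rewrite !qconvE //; last exact: Gswap_det.
have e1 v w : L1 (Gswap G) v w = L2 G v w by apply/ffunP => j; rewrite !ffunE !mxE.
have e2 v w : L2 (Gswap G) v w = L1 G v w by apply/ffunP => j; rewrite !ffunE !mxE.
by apply: eq_bigr => z _; rewrite /tens /keyinv /= !e1 !e2 mulrC.
Qed.

Variable G : 'M['F_d]_2.
Hypothesis dG : \det G != 0.

Lemma qconv_psd (s a : op R Q) : psd s -> psd a -> psd (qconv G s a).
Proof.
move=> hs ha.
apply: (@psd_ext _ _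
  (fun x y => \sum_z (1 : C)^* * tens s a (keyinv G (x, z)) (keyinv G (y, z)) * 1)).
  by move=> x y; rewrite qconvE //; apply: eq_bigr => z _; rewrite conjC1 mul1r mulr1.
apply: psd_sum => z.
exact: (psd_pull (fun x : Q => keyinv G (x, z)) (fun _ => 1) (tens_psd hs ha)).
Qed.

(* keyinv G is a bijection of labels, so the trace is multiplicative. *)
Lemma qconv_trace (s a : op R Q) : trace (qconv G s a) = trace s * trace a.
Proof.
rewrite /trace; under eq_bigr do rewrite qconvE //.
rewrite -(sum_pair (fun p => tens s a (keyinv G p) (keyinv G p))).
have -> : \sum_p tens s a (keyinv G p) (keyinv G p) = \sum_p tens s a p p.
  by rewrite [RHS](reindex_inj (can_inj (keyinvK dG))).
by rewrite sum_pair big_distrl; apply: eq_bigr => u _; rewrite big_distrr.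
Qed.

Lemma qconv_state (s a : op R Q) : is_state s -> is_state a -> is_state (qconv G s a).
Proof.
move=> [hs ts] [ha ta]; split; first exact: qconv_psd.
by rewrite qconv_trace ts ta mul1r.
Qed.

Lemma qconv_lin (I : finType) (s A : op R Q) (c : I -> C) (B : I -> op R Q) :
  (forall x y, A x y = \sum_i c i * B i x y) ->
  forall x y, qconv G s A x y = \sum_i c i * qconv G s (B i) x y.
Proof.
move=> eA x y; rewrite qconvE //.
under [RHS]eq_bigr do rewrite qconvE // mulr_sumr.
rewrite [RHS]exchange_big /=; apply: eq_bigr => z _.
by rewrite /tens eA mulr_sumr; apply: eq_bigr => i _; ring.
Qed.

Lemma qconv_sub (s a b : op R Q) x y :
  op_sub (qconv G s a) (qconv G s b) x y = qconv G s (op_sub a b) x y.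
Proof. by rewrite /op_sub !qconvE // -sumrB; apply: eq_bigr => z _; rewrite /tens; ring. Qed.

Definition upd (x : Q) (i : 'I_n) (c : 'F_d) : Q :=
  [ffun j => if j == i then c else x j].

Lemma ptraceE (A : op R Q) i x y : ptrace i A x y = \sum_c A (upd x i c) (upd y i c).
Proof. by []. Qed.

(* Locality of the key map at qudit i: summing over the i-th qudit c of the output and
   over the traced-out label z amounts to summing over the traced-out label w (whose i-th
   qudit is kept by the first input) and over the i-th qudit b of the second input. *)
Lemma sum_keyinv_upd (i : 'I_n) (F : Q * Q -> Q * Q -> C) x y :
  \sum_c \sum_z F (keyinv G (upd x i c, z)) (keyinv G (upd y i c, z)) =
  \sum_w \sum_b F (upd (L1 G x w) i (w i), upd (L2 G x w) i b)
                  (upd (L1 G y w) i (w i), upd (L2 G y w) i b).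
Proof.
pose N := (\det G)^-1.
pose Psi (q : 'F_d * Q) :=
  (N * (G 1 1 * q.2 i - G 1 0 * q.1), upd q.2 i (N * (- G 0 1 * q.2 i + G 0 0 * q.1))).
pose Phi (p : 'F_d * Q) :=
  (G 0 1 * p.1 + G 1 1 * p.2 i, upd p.2 i (G 0 0 * p.1 + G 1 0 * p.2 i)).
have hN := det_invK dG; rewrite -/N in hN.
have inv1 u b : G 0 0 * (N * (G 1 1 * u - G 1 0 * b)) +
                G 1 0 * (N * (- G 0 1 * u + G 0 0 * b)) = u.
  by rewrite -[RHS]mul1r -hN; ring.
have inv2 u b : G 0 1 * (N * (G 1 1 * u - G 1 0 * b)) +
                G 1 1 * (N * (- G 0 1 * u + G 0 0 * b)) = b.
  by rewrite -[RHS]mul1r -hN; ring.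
have PsiK : cancel Psi Phi.
  move=> [b w]; rewrite /Psi /Phi /= !ffunE eqxx inv2; congr pair.
  by apply/ffunP => j; rewrite !ffunE; case: eqP => [->|_] //; rewrite inv1.
have eL1 v w b : L1 G (upd v i (Psi (b, w)).1) (Psi (b, w)).2 = upd (L1 G v w) i (w i).
  by apply/ffunP => j; rewrite /Psi /= !ffunE; case: eqP => _; [rewrite inv1|].
have eL2 v w b : L2 G (upd v i (Psi (b, w)).1) (Psi (b, w)).2 = upd (L2 G v w) i b.
  by apply/ffunP => j; rewrite /Psi /= !ffunE; case: eqP => _; [rewrite inv2|].
rewrite -(sum_pair (fun p => F (keyinv G (upd x i p.1, p.2)) (keyinv G (upd y i p.1, p.2)))).
rewrite (reindex_inj (can_inj PsiK)) sum_pair exchange_big /=.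
by apply: eq_bigr => w _; apply: eq_bigr => b _; rewrite /keyinv /= !eL1 !eL2.
Qed.

Lemma qconv_ptrace (s a : op R Q) i x y :
  ptrace i (qconv G s a) x y =
  \sum_w s (upd (L1 G x w) i (w i)) (upd (L1 G y w) i (w i)) *
         ptrace i a (L2 G x w) (L2 G y w).
Proof.
rewrite ptraceE; under eq_bigr do rewrite qconvE //.
rewrite (sum_keyinv_upd i (tens s a)).
by apply: eq_bigr => w _; rewrite ptraceE mulr_sumr.
Qed.

End Convolution.

Section WassersteinCosts.
Variable R : realType.
Local Notation C := (R[i]).
Variables (d n : nat).
Local Notation Q := (qbasis d n).

Definition adm_pair (i : 'I_n) (r s : op R Q) : Prop :=
  qstate r /\ qstate s /\ ptrace i r = ptrace i s.

Definition W1_costs (A : op R Q) : set R :=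
  [set t : R | exists (c : 'I_n -> R) (rh sg : 'I_n -> op R Q),
     (forall i, adm_pair i (rh i) (sg i)) /\
     (forall x y, A x y = \sum_(i < n) real_complex R (c i) * (rh i x y - sg i x y)) /\
     t = \sum_(i < n) `|c i| ].

Lemma W1E (A : op R Q) : W1 A = inf (W1_costs A).
Proof. by []. Qed.

(* Costs are nonnegative, so W1 A is a lower bound of every admissible cost. *)
Lemma W1_le_cost (A : op R Q) t : W1_costs A t -> W1 A <= t.
Proof.
have lbA : has_lbound (W1_costs A).
  by exists 0 => _ [c [_ [_ [_ [_ ->]]]]]; apply: sumr_ge0 => i _; apply: normr_ge0.
by move=> At; rewrite W1E; apply: (ge_inf lbA).
Qed.

Lemma W1_le_W1 (A B : op R Q) :
  (W1_costs A !=set0)%classic -> (W1_costs A `<=` W1_costs B)%classic -> W1 B <= W1 A.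
Proof. by move=> neA AB; rewrite [W1 A]W1E; apply: lb_le_inf => // t /AB /W1_le_cost. Qed.

Lemma W1_costs_ext (A B : op R Q) :
  (forall x y, A x y = B x y) -> (W1_costs A `<=` W1_costs B)%classic.
Proof.
move=> eAB _ [c [rh [sg [adm [eA ->]]]]]; exists c, rh, sg; do !split => //.
by move=> x y; rewrite -eAB.
Qed.

Definition mix (p q : C) (A B : op R Q) : op R Q := fun u v => p * A u v + q * B u v.

Lemma qstate_mix (A B : op R Q) (p q : C) : 0 <= p -> 0 <= q -> p + q = 1 ->
  qstate A -> qstate B -> qstate (mix p q A B).
Proof.
move=> p0 q0 pq [hA tA] [hB tB]; split; first by apply: psd_add; apply: psd_scale.
by rewrite /trace big_split /= -!mulr_sumr -/(trace A) -/(trace B) tA tB !mulr1.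
Qed.

Lemma ptrace_mix (i : 'I_n) (A B : op R Q) (p q : C) :
  ptrace i (mix p q A B) = mix p q (ptrace i A) (ptrace i B).
Proof.
by apply/funext => x; apply/funext => y; rewrite !ptraceE big_split /= -!mulr_sumr.
Qed.

Lemma adm_pair_mix i (p q : C) r1 s1 r2 s2 : 0 <= p -> 0 <= q -> p + q = 1 ->
  adm_pair i r1 s1 -> adm_pair i r2 s2 -> adm_pair i (mix p q r1 r2) (mix p q s1 s2).
Proof.
move=> p0 q0 pq [r1S [s1S e1]] [r2S [s2S e2]].
by split; [|split]; [exact: qstate_mix | exact: qstate_mix | rewrite !ptrace_mix e1 e2].
Qed.

(* A term c (r - s) equals |c| (r' - s'), exchanging the two states if c < 0. *)
Lemma adm_term_abs i (c : R) r s : adm_pair i r s ->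
  exists r' s', adm_pair i r' s' /\ forall x y,
    real_complex R `|c| * (r' x y - s' x y) = real_complex R c * (r x y - s x y).
Proof.
move=> [rS [sS ers]]; have [c0|c0] := leP 0 c.
  by exists r, s; split => // x y; rewrite ger0_norm.
exists s, r; split => // x y.
by rewrite ltr0_norm // rmorphN /=; ring.
Qed.

Lemma convex_split (a b : R) : 0 <= a -> 0 <= b ->
  exists p, [/\ 0 <= p, 0 <= 1 - p, (a + b) * p = a & (a + b) * (1 - p) = b].
Proof.
move=> a0 b0; have [ab0|abn0] := eqVneq (a + b) 0.
  move/eqP: ab0; rewrite paddr_eq0 // => /andP[/eqP -> /eqP ->].
  by exists 1; rewrite subrr addr0 !mul0r ler01 lexx.
have abp : 0 < a + b by rewrite lt_def abn0 addr_ge0.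
have ep : (a + b) * (a / (a + b)) = a by rewrite mulrC divfK.
have eq : (a + b) * (1 - a / (a + b)) = b by rewrite mulrBr mulr1 ep addrAC subrr add0r.
exists (a / (a + b)); split => //; first exact: divr_ge0 a0 (ltW abp).
by rewrite -(pmulr_rge0 _ abp) eq.
Qed.

Lemma adm_terms_add i (c1 c2 : R) r1 s1 r2 s2 :
  adm_pair i r1 s1 -> adm_pair i r2 s2 ->
  exists r s, adm_pair i r s /\ forall x y,
    real_complex R (`|c1| + `|c2|) * (r x y - s x y) =
    real_complex R c1 * (r1 x y - s1 x y) + real_complex R c2 * (r2 x y - s2 x y).
Proof.
move=> /(adm_term_abs c1) [r1' [s1' [h1 e1]]] /(adm_term_abs c2) [r2' [s2' [h2 e2]]].
have [p [p0 q0 ep eq]] := convex_split (normr_ge0 c1) (normr_ge0 c2).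
exists (mix (real_complex R p) (real_complex R (1 - p)) r1' r2'),
       (mix (real_complex R p) (real_complex R (1 - p)) s1' s2'); split.
  by apply: adm_pair_mix; rewrite ?ler0c // -rmorphD /= addrC subrK.
move=> x y; rewrite -e1 -e2; set m := `|c1| + `|c2| in ep eq *.
by rewrite -ep -eq /mix !rmorphM /=; ring.
Qed.

(* Costs are subadditive: admissible decompositions of A and B merge qudit by qudit. *)
Lemma W1_costs_add (A B : op R Q) t t' : W1_costs A t -> W1_costs B t' ->
  W1_costs (fun x y => A x y + B x y) (t + t').
Proof.
move=> [c1 [r1 [s1 [h1 [e1 ->]]]]] [c2 [r2 [s2 [h2 [e2 ->]]]]].
have merged : forall i, exists rs : op R Q * op R Q, adm_pair i rs.1 rs.2 /\ forall x y,
    real_complex R (`|c1 i| + `|c2 i|) * (rs.1 x y - rs.2 x y) =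
    real_complex R (c1 i) * (r1 i x y - s1 i x y) +
    real_complex R (c2 i) * (r2 i x y - s2 i x y).
  move=> i; have [r [s hrs]] := adm_terms_add (c1 i) (c2 i) (h1 i) (h2 i).
  by exists (r, s).
have [f hf] := choice merged.
exists (fun i => `|c1 i| + `|c2 i|), (fun i => (f i).1), (fun i => (f i).2).
split; [by move=> i; case: (hf i) | split].
  by move=> x y; rewrite e1 e2 -big_split; apply: eq_bigr => i _; case: (hf i).
rewrite -big_split; apply: eq_bigr => i _.
by rewrite (@ger0_norm _ (`|c1 i| + `|c2 i|)) //; apply: addr_ge0.
Qed.

Lemma W1_add_le (A B : op R Q) :
  (W1_costs A !=set0)%classic -> (W1_costs B !=set0)%classic ->
  W1 (fun x y => A x y + B x y) <= W1 A + W1 B.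
Proof.
move=> neA neB.
rewrite -lerBlDr [W1 A]W1E; apply: lb_le_inf => // t At.
rewrite lerBlDr addrC -lerBlDr [W1 B]W1E; apply: lb_le_inf => // t' Bt'.
by rewrite lerBlDr addrC; apply/W1_le_cost/W1_costs_add.
Qed.

End WassersteinCosts.

Section HybridStates.
Variable R : realType.
Local Notation C := (R[i]).
Variables (d n : nat).
Local Notation Q := (qbasis d n).

Lemma upd_upd (x : Q) i c e : upd (upd x i c) i e = upd x i e.
Proof. by apply/ffunP => j; rewrite !ffunE; case: eqP. Qed.

Lemma upd_id (x : Q) i : upd x i (x i) = x.
Proof. by apply/ffunP => j; rewrite !ffunE; case: eqP => [->|]. Qed.

Lemma upd_at (x : Q) i c : upd x i c i = c.
Proof. by rewrite ffunE eqxx. Qed.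

Lemma sum_upd (i : 'I_n) (F : Q -> C) :
  \sum_c \sum_x F (upd x i c) = #|'F_d|%:R * \sum_x F x.
Proof.
rewrite -(sum_pair (fun p : 'F_d * Q => F (upd p.2 i p.1))).
pose phi (p : 'F_d * Q) := (p.2 i, upd p.2 i p.1).
have phiK : cancel phi phi by move=> [c x]; rewrite /phi /= upd_at upd_upd upd_id.
rewrite (reindex_inj (can_inj phiK)) sum_pair /phi /=.
under eq_bigr do under eq_bigr do rewrite upd_upd upd_id.
by rewrite sumr_const card_ord mulr_natl.
Qed.

Lemma sum_ptrace (i : 'I_n) (A : op R Q) :
  \sum_x ptrace i A x x = #|'F_d|%:R * trace A.
Proof. by rewrite /trace -(sum_upd i (fun z => A z z)) exchange_big. Qed.

Definition agree (k : nat) (s x : Q) : bool :=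
  [forall j : 'I_n, (j < k)%N ==> (x j == s j)].
Definition splice (k : nat) (t x : Q) : Q :=
  [ffun j : 'I_n => if (j < k)%N then t j else x j].
Definition ind (b : bool) : C := b%:R.

(* Up to normalization, the state obtained from A by tracing out the first k qudits and
   replacing them by the maximally mixed state. *)
Definition raw (k : nat) (A : op R Q) : op R Q := fun x y =>
  \sum_s \sum_t (ind (agree k s x))^* * A (splice k t x) (splice k t y) * ind (agree k s y).

Lemma raw_psd k A : psd A -> psd (raw k A).
Proof.
move=> hA; apply: psd_sum => s; apply: psd_sum => t.
exact: (psd_pull (splice k t) (fun x => ind (agree k s x)) hA).
Qed.

Lemma raw_n (A : op R Q) x y : raw n A x y = (x == y)%:R * trace A.
Proof.
have agree_n s z : agree n s z = (z == s).
  apply/forallP/eqP => [h|->]; last by move=> j; rewrite eqxx implybT.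
  by apply/ffunP => j; have := h j; rewrite ltn_ord => /eqP.
have splice_n t z : splice n t z = t by apply/ffunP => j; rewrite ffunE ltn_ord.
rewrite /raw /trace.
under eq_bigr do under eq_bigr do rewrite !agree_n !splice_n /ind conjC_nat mulrAC -mulrA.
under eq_bigr do rewrite -mulr_sumr -mulr_sumr [x == _]eq_sym.
by rewrite (sum_delta x (fun s => (y == s)%:R * \sum_t A t t)) eq_sym.
Qed.

Lemma raw_0 (A : op R Q) x y : raw 0 A x y = (#|Q| * #|Q|)%:R * A x y.
Proof.
have agree_0 s z : agree 0 s z by apply/forallP.
have splice_0 t z : splice 0 t z = z by apply/ffunP => j; rewrite ffunE.
rewrite /raw.
under eq_bigr do under eq_bigr do rewrite !agree_0 !splice_0 /ind conjC_nat mul1r mulr1.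
by rewrite !sumr_const -mulrnA mulr_natl.
Qed.

Lemma ord_eqF_lt (i j : 'I_n) : (j < i)%N -> (j == i) = false.
Proof. by move=> lt; apply/negbTE; rewrite neq_ltn lt. Qed.

Lemma ord_eqF_gt (i j : 'I_n) : (i < j)%N -> (j == i) = false.
Proof. by move=> gt; apply/negbTE; rewrite neq_ltn gt orbT. Qed.

Lemma agree_upd (i : 'I_n) s x c : agree i s (upd x i c) = agree i s x.
Proof.
apply: eq_forallb => j; rewrite ffunE; case: (ltnP j i) => //= lt.
by rewrite (ord_eqF_lt lt).
Qed.

Lemma agree_updS (i : 'I_n) s x c : agree i.+1 s (upd x i c) = agree i s x && (c == s i).
Proof.
apply/forallP/andP => [h|[/forallP h1 /eqP h2] j].
  split; last by have := h i; rewrite ltnS leqnn /= upd_at.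
  apply/forallP => j; apply/implyP => lt; have := h j.
  by rewrite ltnS (ltnW lt) ffunE (ord_eqF_lt lt).
apply/implyP; rewrite ltnS leq_eqVlt ffunE => /orP[/eqP/val_inj ->|lt].
  by rewrite eqxx h2.
by rewrite (ord_eqF_lt lt); have := h1 j; rewrite lt.
Qed.

Lemma splice_upd (i : 'I_n) t x c : splice i t (upd x i c) = splice i.+1 (upd t i c) x.
Proof.
apply/ffunP => j; rewrite !ffunE ltnS.
case: (ltngtP j i) => [lt|gt|eq].
- by rewrite (ord_eqF_lt lt).
- by rewrite (ord_eqF_gt gt).
- by rewrite (val_inj eq) eqxx.
Qed.

Lemma splice_updS (i : 'I_n) t x c : splice i.+1 t (upd x i c) = splice i.+1 t x.
Proof.
apply/ffunP => j; rewrite !ffunE ltnS.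
by case: (ltngtP j i) => // gt; rewrite (ord_eqF_gt gt).
Qed.

Lemma raw_ptrace (i : 'I_n) (A : op R Q) x y :
  ptrace i (raw i A) x y = #|'F_d|%:R * ptrace i (raw i.+1 A) x y.
Proof.
have ind_and (a b e : bool) (P : C) :
    (ind (a && e))^* * P * ind (b && e) = ind e * ((ind a)^* * P * ind b).
  by rewrite /ind !conjC_nat; case: a; case: b; case: e => /=; ring.
rewrite !ptraceE /raw.
under eq_bigr do under eq_bigr do under eq_bigr do rewrite !agree_upd !splice_upd.
rewrite exchange_big /=.
under eq_bigr do rewrite (sum_upd i (fun t =>
  (ind (agree i _ x))^* * A (splice i.+1 t x) (splice i.+1 t y) * ind (agree i _ y))).
rewrite -mulr_sumr; congr (_ * _).
under [RHS]eq_bigr do under eq_bigr do under eq_bigr do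
  rewrite !agree_updS !splice_updS ind_and.
under [RHS]eq_bigr do under eq_bigr do rewrite -mulr_sumr.
rewrite [RHS]exchange_big /=; apply: eq_bigr => s _.
by rewrite /ind (sum_delta (s i)).
Qed.

(* The normalization of raw k: trace (raw k A) = ck k * trace A. *)
Definition ck (k : nat) : C := (#|'F_d| ^ (n - k) * #|Q|)%:R.

Lemma cardF_neq0 : (#|'F_d|%:R : C) != 0.
Proof. by rewrite card_ord pnatr_eq0. Qed.

Lemma ck_neq0 k : ck k != 0.
Proof.
rewrite /ck pnatr_eq0 muln_eq0 negb_or expn_eq0 card_ord /= -lt0n.
by apply/card_gt0P; exists 0.
Qed.

Lemma ckS (k : nat) : (k < n)%N -> ck k = #|'F_d|%:R * ck k.+1.
Proof. by move=> lt; rewrite /ck -natrM mulnA -expnS subnSK. Qed.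

Lemma raw_traceS (i : 'I_n) (A : op R Q) :
  trace (raw i A) = #|'F_d|%:R * trace (raw i.+1 A).
Proof.
apply: (mulfI cardF_neq0).
rewrite -(sum_ptrace i (raw i A)) -(sum_ptrace i (raw i.+1 A)) mulr_sumr.
by apply: eq_bigr => x _; rewrite raw_ptrace.
Qed.

Lemma raw_trace (A : op R Q) k : (k <= n)%N -> trace (raw k A) = ck k * trace A.
Proof.
move=> kn; have [m] : exists m, (k + m = n)%N by exists (n - k)%N; rewrite subnKC.
elim: m k {kn} => [|m IH] k hk.
  rewrite addn0 in hk; subst k; rewrite /trace.
  under eq_bigr do rewrite raw_n eqxx mul1r.
  by rewrite sumr_const /ck subnn expn0 mul1n mulr_natl.
have lt : (k < n)%N by rewrite -hk addnS ltnS leq_addr.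
by rewrite (raw_traceS (Ordinal lt)) /= (IH k.+1) ?addSnnS // mulrA -ckS.
Qed.

Definition hyb (k : nat) (A : op R Q) : op R Q := fun x y => (ck k)^-1 * raw k A x y.

Lemma hyb_state k (A : op R Q) : (k <= n)%N -> qstate A -> qstate (hyb k A).
Proof.
move=> kn [hA tA]; split.
  by apply: psd_scale; [rewrite invr_ge0 /ck ler0n | exact: raw_psd].
rewrite /trace -mulr_sumr -/(trace (raw k A)) raw_trace // tA mulr1.
exact: mulVf (ck_neq0 k).
Qed.

Lemma hyb_ptrace (i : 'I_n) (A : op R Q) : ptrace i (hyb i A) = ptrace i (hyb i.+1 A).
Proof.
apply/funext => x; apply/funext => y; rewrite !ptraceE -!mulr_sumr -!ptraceE.
rewrite raw_ptrace mulrA; congr (_ * _).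
by rewrite (ckS (ltn_ord i)) invfM mulrAC (mulVf cardF_neq0) mul1r.
Qed.

Lemma hyb_n (A : op R Q) x y : trace A = 1 -> hyb n A x y = (ck n)^-1 * (x == y)%:R.
Proof. by move=> tA; rewrite /hyb raw_n tA mulr1. Qed.

Lemma hyb_0 (A : op R Q) x y : hyb 0 A x y = A x y.
Proof.
rewrite /hyb raw_0 /ck subn0.
have -> : (#|'F_d| ^ n = #|Q|)%N by rewrite card_ffun !card_ord.
have Q0 : ((#|Q| * #|Q|)%:R : C) != 0.
  by rewrite pnatr_eq0 muln_eq0 orbb -lt0n; apply/card_gt0P; exists [ffun=> 0].
by rewrite mulrA (mulVf Q0) mul1r.
Qed.

(* Every difference of two states has an admissible decomposition: with the hybrids
   rho_k, tau_k,  rho - tau = sum_i 2 (r_i - s_i)  where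
   r_i = (rho_i + tau_(i+1)) / 2  and  s_i = (rho_(i+1) + tau_i) / 2. *)
Lemma W1_costs_neq0 (rho tau : op R Q) : qstate rho -> qstate tau ->
  (W1_costs (op_sub rho tau) !=set0)%classic.
Proof.
move=> hr ht; pose h : C := 2^-1.
have h0 : 0 <= h by rewrite invr_ge0 ler0n.
have hh : h + h = 1 by rewrite -mulr2n -mulr_natr mulVf // pnatr_eq0.
exists (\sum_(i < n) `|2 : R|), (fun _ => 2),
  (fun i => mix h h (hyb i rho) (hyb i.+1 tau)),
  (fun i => mix h h (hyb i.+1 rho) (hyb i tau)).
split; last split => //.
  move=> i; have iS : (i.+1 <= n)%N := ltn_ord i; have iW := ltnW iS.
  split; [|split].
  - by apply: qstate_mix => //; apply: hyb_state.
  - by apply: qstate_mix => //; apply: hyb_state.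
  - by rewrite !ptrace_mix (hyb_ptrace i rho) (hyb_ptrace i tau).
move=> x y; pose f k := hyb k rho x y - hyb k tau x y.
have term (i : 'I_n) : real_complex R 2 * (mix h h (hyb i rho) (hyb i.+1 tau) x y -
    mix h h (hyb i.+1 rho) (hyb i tau) x y) = - (f i.+1 - f i).
  have h2 : 2 * h = 1 by rewrite mulfV // pnatr_eq0.
  by rewrite rmorph_nat /mix /f mulrBr !mulrDr !mulrA h2 !mul1r /hyb; ring.
under eq_bigr do rewrite term.
rewrite sumrN -(big_mkord xpredT (fun k => f k.+1 - f k)) telescope_sumr // opprB.
by rewrite /f (hyb_n x y hr.2) (hyb_n x y ht.2) subrr subr0 !hyb_0.
Qed.

End HybridStates.

Section Contraction.
Variable R : realType.
Variables (d n : nat).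
Local Notation Q := (qbasis d n).

Lemma W1_costs_qconv (G : 'M['F_d]_2) (s rho tau : op R Q) : \det G != 0 -> qstate s ->
  (W1_costs (op_sub rho tau) `<=` W1_costs (op_sub (qconv G s rho) (qconv G s tau)))%classic.
Proof.
move=> dG hs _ [c [rh [sg [adm [eA ->]]]]].
exists c, (fun i => qconv G s (rh i)), (fun i => qconv G s (sg i)); split; last split => //.
  move=> i; have [rS [sS ers]] := adm i.
  split; [exact: qconv_state | split; first exact: qconv_state].
  by apply/funext => x; apply/funext => y; rewrite !qconv_ptrace // ers.
move=> x y; rewrite qconv_sub // (qconv_lin dG _ eA).
by apply: eq_bigr => i _; rewrite -qconv_sub.
Qed.

Lemma W1_qconv_r (G : 'M['F_d]_2) (s rho tau : op R Q) :
  \det G != 0 -> qstate s -> qstate rho -> qstate tau ->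
  W1 (op_sub (qconv G s rho) (qconv G s tau)) <= W1 (op_sub rho tau).
Proof.
by move=> dG hs hr ht; apply: W1_le_W1; [exact: W1_costs_neq0 | exact: W1_costs_qconv].
Qed.

Lemma W1_qconv_l (G : 'M['F_d]_2) (s rho tau : op R Q) :
  \det G != 0 -> qstate s -> qstate rho -> qstate tau ->
  W1 (op_sub (qconv G rho s) (qconv G tau s)) <= W1 (op_sub rho tau).
Proof.
move=> dG hs hr ht; apply: W1_le_W1; first exact: W1_costs_neq0.
move=> t /(W1_costs_qconv (Gswap_det dG) hs); apply: W1_costs_ext => x y.
by rewrite /op_sub !(qconv_swap _ _ _ _ dG).
Qed.

End Contraction.

Lemma W1_triangle (R : realType) (d n : nat) (a b c : op R (qbasis d n)) :
  qstate a -> qstate b -> qstate c ->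
  W1 (op_sub a c) <= W1 (op_sub a b) + W1 (op_sub b c).
Proof.
move=> ha hb hc.
have -> : op_sub a c = (fun x y => op_sub a b x y + op_sub b c x y).
  by apply/funext => x; apply/funext => y; rewrite /op_sub addrA subrK.
exact: W1_add_le (W1_costs_neq0 ha hb) (W1_costs_neq0 hb hc).
Qed.

Unset Implicit Arguments.

Theorem mainTheorem9 (R : realType) (d n : nat) (G : 'M['F_d]_2)
  (rho tau sigma rho1 rho2 sigma1 sigma2 : op R (qbasis d n)) :
  prime d -> (1 <= n)%N -> \det G != 0 ->
  qstate rho -> qstate tau -> qstate sigma -> qstate rho1 -> qstate rho2 ->
  qstate sigma1 -> qstate sigma2 ->
  (odd_positive G ->
     W1 (op_sub (qconv G sigma rho) (qconv G sigma tau)) <= W1 (op_sub rho tau)) /\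
  (even_positive G ->
     W1 (op_sub (qconv G rho sigma) (qconv G tau sigma)) <= W1 (op_sub rho tau)) /\
  (positiveG G ->
     W1 (op_sub (qconv G rho1 sigma1) (qconv G rho2 sigma2))
       <= W1 (op_sub rho1 rho2) + W1 (op_sub sigma1 sigma2)).
Proof.
move=> _ _ dG hr ht hs hr1 hr2 hs1 hs2.
split; first by move=> _; exact: W1_qconv_r.
split; first by move=> _; exact: W1_qconv_l.
move=> _; have st (a s : op R (qbasis d n)) : qstate a -> qstate s -> qstate (qconv G a s).
  exact: qconv_state.
apply: le_trans (W1_triangle (st _ _ hr1 hs1) (st _ _ hr2 hs1) (st _ _ hr2 hs2)) _.
by apply: lerD; [exact: W1_qconv_l | exact: W1_qconv_r].
Qed.
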